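(* Every factor-critical edge-stable equimatchable graph is 2-connected.
   Context: All graphs are finite and simple. A graph is equimatchable if all its maximal matchings have the same cardinality; an equimatchable graph $G$ is edge-stable if $G\setminus e$ (delete edge $e$, keep vertices) is equimatchable for every $e\in E(G)$. A graph $G$ is factor-critical if $G-v$ has a perfect matching for every $v\in V(G)$. *)

(* A finite simple graph is given by a vertex set V : {set T}
   over a finType T together with a symmetric irreflexive adjacency relation
   e : rel T (only its restriction to V matters). *)
From mathcomp Require Import all_boot.
Set Implicit Arguments. Unset Strict Implicit. Unset Printing Implicit Defensive.

Section Graphs.
Variable T : finType.

Definition is_matching (V : {set T}) (e : rel T) (M : {set {set T}}) : Prop :=
  (forall A, A \in M -> exists x y, [/\ x \in V, y \in V, e x y & A = [set x; y]])
  /\ (forall A B, A \in M -> B \in M -> A != B -> [disjoint A & B]).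

Definition maximal_matching (V : {set T}) (e : rel T) (M : {set {set T}}) : Prop :=
  is_matching V e M /\
  (forall M', is_matching V e M' -> M \subset M' -> M' = M).

Definition equimatchable (V : {set T}) (e : rel T) : Prop :=
  forall M1 M2, maximal_matching V e M1 -> maximal_matching V e M2 -> #|M1| = #|M2|.

Definition del_edge (e : rel T) (x y : T) : rel T :=
  [rel a b | e a b && ([set a; b] != [set x; y])].

Definition edge_stable (V : {set T}) (e : rel T) : Prop :=
  equimatchable V e /\
  (forall x y, x \in V -> y \in V -> e x y -> equimatchable V (del_edge e x y)).

Definition perfect_matching (V : {set T}) (e : rel T) (M : {set {set T}}) : Prop :=
  is_matching V e M /\ \bigcup_(A in M) A = V.

Definition factor_critical (V : {set T}) (e : rel T) : Prop :=
  forall v, v \in V -> exists M, perfect_matching (V :\ v) e M.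

Definition connected_graph (V : {set T}) (e : rel T) : Prop :=
  forall x y, x \in V -> y \in V ->
    connect [rel a b | [&& a \in V, b \in V & e a b]] x y.

Definition two_connected (V : {set T}) (e : rel T) : Prop :=
  [/\ 3 <= #|V|, connected_graph V e & forall v, v \in V -> connected_graph (V :\ v) e].

End Graphs.

From mathcomp Require Import all_boot.
From Stdlib Require Import Classical.

(* Suppose v were a cut vertex. Take a neighbour c of v, a vertex a outside the
   component of c in G - v, and a perfect matching N of G - v containing edges
   ab and cd; then b lies outside and d inside the component of c, so neither a
   nor b is adjacent to d. Replacing ab and cd in N by vc gives a matching of
   G \ ab with one edge fewer than N, and it is maximal since only a, b, d are
   left uncovered. A perfect matching of G - a is a matching of G \ ab of size
   #|N|, so G \ ab is not equimatchable. Finally, factor-critical graphs have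
   odd order, so a graph on more than one vertex with no cut vertex is 2-connected. *)

Set Implicit Arguments. Unset Strict Implicit. Unset Printing Implicit Defensive.

Section Matchings.
Variable T : finType.
Implicit Types (e : rel T) (V W : {set T}) (M N : {set {set T}}).

Lemma mem_cover M A x : A \in M -> x \in A -> x \in cover M.
Proof. by move=> AM xA; apply/bigcupP; exists A. Qed.

Lemma matching_trivIset e V M : is_matching V e M -> trivIset M.
Proof. by case=> _ M_disj; apply/trivIsetP. Qed.

Lemma matching_subset e V W M : V \subset W -> is_matching V e M -> is_matching W e M.
Proof.
move=> sVW [M_edge M_disj]; split=> // A /M_edge[x [y [xV yV exy ->]]].
by exists x, y; split; rewrite ?(subsetP sVW).
Qed.

Lemma matching_submatching e V M N : N \subset M -> is_matching V e M -> is_matching V e N.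
Proof.
move=> /subsetP sNM [M_edge M_disj]; split=> [A /sNM /M_edge //|A B /sNM AM /sNM].
exact: M_disj.
Qed.

Lemma matching_del_edge e V M a b :
  [set a; b] \notin M -> is_matching V e M -> is_matching V (del_edge e a b) M.
Proof.
move=> abM [M_edge M_disj]; split=> // A AM.
have [x [y [xV yV exy defA]]] := M_edge A AM.
exists x, y; split=> //; rewrite /del_edge /= exy -defA /=.
by apply: contraNneq abM => <-.
Qed.

Lemma matching_add_edge e V M x y : x \in V -> y \in V -> e x y ->
  x \notin cover M -> y \notin cover M -> is_matching V e M ->
  is_matching V e ([set x; y] |: M).
Proof.
move=> xV yV exy xM yM [M_edge M_disj].
have disj_xy B : B \in M -> [disjoint [set x; y] & B].
  move=> BM; rewrite disjoints_subset; apply/subsetP => z.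
  rewrite !inE => /orP[] /eqP->.
    exact: contra (mem_cover BM) xM.
  exact: contra (mem_cover BM) yM.
split=> [A /setU1P[->|/M_edge] //|A B]; first by exists x, y.
case/setU1P=> [->|AM] /setU1P[->|BM]; rewrite ?eqxx //; last exact: M_disj.
  by move=> _; apply: disj_xy.
by move=> _; rewrite disjoint_sym; apply: disj_xy.
Qed.

Lemma perfect_matching_card e W M : irreflexive e -> perfect_matching W e M -> #|W| = 2 * #|M|.
Proof.
move=> e_irr [M_match <-]; have /eqP <- := matching_trivIset M_match.
rewrite mulnC -sum_nat_const; apply: eq_bigr => A AM.
have [x [y [_ _ exy ->]]] := M_match.1 A AM.
by rewrite cards2; case: eqP exy => // ->; rewrite e_irr.
Qed.

Lemma perfect_matching_setD1_card e V Q N a v : irreflexive e -> a \in V -> v \in V ->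
  perfect_matching (V :\ a) e Q -> perfect_matching (V :\ v) e N -> #|Q| = #|N|.
Proof.
move=> e_irr aV vV /(perfect_matching_card e_irr) cardQ /(perfect_matching_card e_irr) cardN.
apply/eqP; rewrite -(eqn_pmul2l (isT : 0 < 2)) -cardQ -cardN -(eqn_add2l 1).
by move: (cardsD1 a V) (cardsD1 v V); rewrite aV vV => <- <-.
Qed.

Lemma perfect_matching_partner e W M a : symmetric e -> perfect_matching W e M -> a \in W ->
  exists b, [/\ [set a; b] \in M, e a b & b \in W].
Proof.
move=> e_sym [[M_edge _] covM]; rewrite -{1}covM => /bigcupP[A AM aA].
have [p [q [_ _ epq defA]]] := M_edge A AM.
have inW z : z \in A -> z \in W by move=> zA; rewrite -covM; apply/bigcupP; exists A.
move: aA; rewrite defA !inE => /orP[] /eqP->.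
  by exists q; rewrite -defA epq inW // defA !inE eqxx orbT.
by exists p; rewrite setUC -defA e_sym epq inW // defA !inE eqxx.
Qed.

Lemma matching_extends_maximal e V M : is_matching V e M ->
  exists2 M', maximal_matching V e M' & M \subset M'.
Proof.
have [n] := ubnP #|~: M|; elim: n M => // n IH M ltMn M_match.
have [[M' [M'_match sMM' neM'M]]|no_ext] :=
  classic (exists M', [/\ is_matching V e M', M \subset M' & M' != M]); last first.
  exists M => //; split=> // M' M'_match sMM'.
  by apply/eqP/negPn/negP => neM'M; apply: no_ext; exists M'.
have ltMM' : M \proper M' by rewrite properEneq sMM' eq_sym neM'M.
have ltCM'M : #|~: M'| < #|~: M| by rewrite proper_card // properC.
have [M'' M''_max sM'M''] := IH M' (leq_trans ltCM'M ltMn) M'_match.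
by exists M''; last exact: subset_trans sM'M''.
Qed.

Lemma matching_card_le_maximal e V M M' : equimatchable V e ->
  is_matching V e M -> maximal_matching V e M' -> #|M| <= #|M'|.
Proof.
move=> equi M_match M'_max; have [M'' M''_max sMM''] := matching_extends_maximal M_match.
by rewrite (equi _ _ M'_max M''_max) subset_leq_card.
Qed.

Lemma maximal_matching_cover e V M : is_matching V e M ->
  (forall x y, x \in V -> y \in V -> e x y -> (x \in cover M) || (y \in cover M)) ->
  maximal_matching V e M.
Proof.
move=> M_match M_cov; split=> // M' [M'_edge M'_disj] sMM'.
apply/eqP; rewrite eqEsubset sMM' andbT; apply/subsetP => A AM'.
apply/idPn => AM; have [x [y [xV yV exy defA]]] := M'_edge A AM'.
have uncovered z : z \in A -> z \notin cover M.
  move=> zA; apply/bigcupP => -[B BM zB].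
  have neAB : A != B by apply: contraNneq AM => ->.
  by move: (M'_disj A B AM' (subsetP sMM' B BM) neAB) => /disjointFr/(_ zA); rewrite zB.
have [xA yA] : x \in A /\ y \in A by rewrite defA set21 set22.
by move: (M_cov x y xV yV exy); rewrite (negbTE (uncovered x xA)) (negbTE (uncovered y yA)).
Qed.

Lemma maximal_matching_del_edge e V M a b d : symmetric e -> irreflexive e ->
  ~~ e a d -> ~~ e b d -> is_matching V (del_edge e a b) M ->
  {subset V :\: cover M <= [set a; b; d]} -> maximal_matching V (del_edge e a b) M.
Proof.
move=> e_sym e_irr nead nebd M_match uncovered; apply: maximal_matching_cover => // x y xV yV.
move=> /andP[exy ne_xy_ab]; apply/norP => -[xM yM].
have nead' : ~~ e d a by rewrite e_sym.
have nebd' : ~~ e d b by rewrite e_sym.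
move: (uncovered x) (uncovered y) exy ne_xy_ab; rewrite !inE xM yM xV yV -!orbA.
move=> /(_ isT)/or3P[]/eqP-> /(_ isT)/or3P[]/eqP->;
  rewrite ?e_irr ?(negbTE nead) ?(negbTE nebd) ?(negbTE nead') ?(negbTE nebd') // => _;
  by rewrite ?(setUC [set b]) eqxx.
Qed.

Lemma perfect_matching_del_edge e V Q a b :
  perfect_matching (V :\ a) e Q -> is_matching V (del_edge e a b) Q.
Proof.
move=> [Q_match covQ]; apply: matching_del_edge; last exact: matching_subset (subD1set V a) Q_match.
have aQ : a \notin cover Q by rewrite /cover covQ setD11.
by apply: contraNN aQ => abQ; apply: mem_cover abQ (set21 a b).
Qed.

Lemma cover_setU1 A M : cover (A |: M) = A :|: cover M.
Proof. by rewrite /cover bigcup_setU big_set1. Qed.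

(* The witness is N with ab and cd traded for vc: one edge fewer, and only a, b,
   d uncovered. *)
Lemma del_edge_exchange_maximal e V N v a b c d :
  symmetric e -> irreflexive e ->
  v \in V -> perfect_matching (V :\ v) e N ->
  [set a; b] \in N -> [set c; d] \in N -> [set c; d] != [set a; b] ->
  e v c -> ~~ e a d -> ~~ e b d ->
  exists2 M, maximal_matching V (del_edge e a b) M & #|M|.+1 = #|N|.
Proof.
move=> e_sym e_irr vV [N_match covN] abN cdN ne_cd_ab evc nead nebd.
have {}covN : cover N = V :\ v := covN.
set N' := N :\ [set a; b] :\ [set c; d].
have cd_N'ab : [set c; d] \in N :\ [set a; b] by rewrite in_setD1 ne_cd_ab.
have N'_match : is_matching V (del_edge e a b) N'.
  apply: matching_del_edge; first by rewrite !in_setD1 eqxx andbF.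
  apply: (matching_subset (subD1set V v)).
  exact: matching_submatching (subset_trans (subD1set _ _) (subD1set _ _)) N_match.
have covN' : cover N' = V :\ v :\: [set a; b] :\: [set c; d].
  have N_triv := matching_trivIset N_match.
  have Nab_triv := matching_trivIset (matching_submatching (subD1set N _) N_match).
  by rewrite !coverD1 // covN.
have vN' : v \notin cover N' by rewrite covN' !inE eqxx !andbF.
have cN' : c \notin cover N' by rewrite covN' !inE eqxx.
have cV : c \in V.
  by apply: (subsetP (subD1set V v)); rewrite -covN (mem_cover cdN) ?set21.
have ne_vc_ab : [set v; c] != [set a; b].
  have vN : v \notin cover N by rewrite covN setD11.
  by apply: contraNneq vN => vc_ab; rewrite (mem_cover abN) // -vc_ab set21.
exists ([set v; c] |: N').
  apply: maximal_matching_del_edge nead nebd _ _ => //.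
    by apply: matching_add_edge => //; rewrite /del_edge /= evc.
  move=> z; rewrite cover_setU1 covN' !inE => /andP[/norP[/norP[zv /negbTE zc]]].
  rewrite zv zc /= negb_and !negbK => + zV; rewrite zV andbT negbK.
  by case/orP=> [->|/orP[]->]; rewrite ?orbT.
have vc_N' : [set v; c] \notin N'.
  by apply: contraNN vN' => vc_N'; rewrite (mem_cover vc_N') ?set21.
by rewrite cardsU1 vc_N' (cardsD1 [set a; b] N) abN (cardsD1 [set c; d] (N :\ _)) cd_N'ab.
Qed.

End Matchings.

Section Connectivity.
Variable T : finType.
Implicit Types (e : rel T) (V : {set T}).

Lemma factor_critical_odd e V v : irreflexive e -> factor_critical V e -> v \in V -> odd #|V|.
Proof.
move=> e_irr fc vV; have [N /(perfect_matching_card e_irr) cardN] := fc v vV.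
by rewrite (cardsD1 v) vV cardN /= mul2n odd_double.
Qed.

Lemma factor_critical_neighbour e V v x : symmetric e -> irreflexive e ->
  factor_critical V e -> v \in V -> x \in V -> x != v -> exists2 c, c \in V :\ v & e v c.
Proof.
move=> e_sym e_irr fc vV xV xv.
have vVx : v \in V :\ x by rewrite in_setD1 eq_sym xv.
have [N NP] := fc x xV; have [c [_ evc cVx]] := perfect_matching_partner e_sym NP vVx.
exists c => //; rewrite in_setD1 (subsetP (subD1set V x)) // andbT.
by apply: contraTneq evc => ->; rewrite e_irr.
Qed.

Lemma connected_of_no_cut_vertex e V : 3 <= #|V| ->
  (forall v, v \in V -> connected_graph (V :\ v) e) -> connected_graph V e.
Proof.
move=> V3 no_cut x y xV yV; have [->|xy] := eqVneq x y; first exact: connect0.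
have [w] : exists w, w \in V :\ x :\ y.
  apply/set0Pn; rewrite -card_gt0; move: V3.
  by rewrite (cardsD1 x V) (cardsD1 y (V :\ x)) xV in_setD1 yV eq_sym xy.
rewrite !in_setD1 => /and3P[wy wx wV].
have := no_cut w wV x y; rewrite !in_setD1 xV yV eq_sym wx eq_sym wy => /(_ isT isT).
apply: connect_sub => p q /and3P[pW qW epq]; apply: connect1.
by move: pW qW; rewrite /= !in_setD1 => /andP[_ ->] /andP[_ ->].
Qed.

Lemma factor_critical_no_cut_vertex e V v : symmetric e -> irreflexive e ->
  factor_critical V e ->
  (forall a b, a \in V -> b \in V -> e a b -> equimatchable V (del_edge e a b)) ->
  v \in V -> connected_graph (V :\ v) e.
Proof.
move=> e_sym e_irr fc stable vV x y xW yW; set W := V :\ v.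
set R := [rel p q | [&& p \in W, q \in W & e p q]].
apply/idPn => nxy.
have R_sym : connect_sym R.
  by apply: sym_connect_sym => p q /=; rewrite e_sym andbCA.
have R_edge p q : p \in W -> q \in W -> e p q -> connect R p q.
  by move=> pW qW epq; apply: connect1; rewrite /= pW qW.
have inV p : p \in W -> p \in V := subsetP (subD1set V v) p.
have [c cW evc] := factor_critical_neighbour e_sym e_irr fc vV (inV x xW) (setD1P xW).1.
have [a aW nca] : exists2 a, a \in W & ~~ connect R c a.
  have [cx|] := boolP (connect R c x); last by exists x.
  exists y => //; apply: contra nxy; apply: connect_trans; by rewrite R_sym.
have [N NP] := fc v vV.
have [b [abN eab bW]] := perfect_matching_partner e_sym NP aW.
have [d [cdN ecd dW]] := perfect_matching_partner e_sym NP cW.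
have cd : connect R c d := R_edge c d cW dW ecd.
have ncb : ~~ connect R c b.
  by apply: contra nca => cb; apply: connect_trans cb (R_edge b a bW aW _); rewrite e_sym.
have not_d_adj z : z \in W -> ~~ connect R c z -> ~~ e z d.
  move=> zW; apply: contra => ezd; apply: connect_trans cd (R_edge d z dW zW _).
  by rewrite e_sym.
have ne_cd_ab : [set c; d] != [set a; b].
  apply: contraNneq nca => cd_ab.
  have : a \in [set c; d] by rewrite cd_ab set21.
  by rewrite !inE => /orP[] /eqP ->; rewrite ?connect0.
have [M M_max cardM] := del_edge_exchange_maximal e_sym e_irr vV NP abN cdN ne_cd_ab
  evc (not_d_adj a aW nca) (not_d_adj b bW ncb).
have [Q QP] := fc a (inV a aW).
have cardQN := perfect_matching_setD1_card e_irr (inV a aW) vV QP NP.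
have := matching_card_le_maximal (stable a b (inV a aW) (inV b bW) eab)
  (perfect_matching_del_edge b QP) M_max.
by rewrite cardQN -cardM ltnn.
Qed.

End Connectivity.

Theorem corollary3p9 (T : finType) (V : {set T}) (e : rel T) :
  symmetric e -> irreflexive e -> 1 < #|V| ->
  factor_critical V e -> edge_stable V e -> two_connected V e.
Proof.
move=> e_sym e_irr V_gt1 fc [_ stable].
have [v vV] : exists v, v \in V by apply/card_gt0P; apply: ltnW.
have V_ge3 : 3 <= #|V|.
  by move: V_gt1 (factor_critical_odd e_irr fc vV); case: #|V| => [|[|[]]].
have no_cut w : w \in V -> connected_graph (V :\ w) e.
  exact: factor_critical_no_cut_vertex.
by split=> //; apply: connected_of_no_cut_vertex.
Qed.
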